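(* Let $(X,\mathcal{T})$ be a finite topological space with furtherness function $\Psi$. The collection $\mathcal{B}^-=\{B^-(x,n)\mid x\in X,\ n\in\mathbb{N}\}$ of backward open balls $B^-(x,n)=\{y\in X\mid \Psi(y,x)<n\}$ is a basis for a topology on $X$, and this topology is the opposite topology $\mathcal{T}^{op}$, i.e. the topology on $X$ whose open sets are exactly the closed sets of $\mathcal{T}$.
   Context: Here $\mathbb{N}=\{1,2,3,\dots\}$. For a finite topological space $X$ and $x\in X$, $U_x$ denotes the minimal open set containing $x$. A nested sequence of open sets around $x$ is a finite sequence $U_0\subsetneq U_1\subsetneq\cdots\subsetneq U_m=X$ of open sets with $U_0=U_x$ such that for each $j$ there is no open set $V$ with $U_j\subsetneq V\subsetneq U_{j+1}$. The furtherness function $\Psi:X\times X\to\{0,1,\dots,|X|-1\}$ is defined by: $\Psi(x,y)$ is the smallest integer $k\ge 0$ such that there exists a nested sequence $(U_j)_{j\ge0}$ of open sets around $x$ with $y\in U_k$. *)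

From mathcomp Require Import all_boot.
From mathcomp Require Import boolp.
Set Implicit Arguments. Unset Strict Implicit. Unset Printing Implicit Defensive.

Section FiniteTop.
Variable T : finType.

(* Since T is finite, closure under binary unions/intersections is the
   same as closure under arbitrary unions / finite intersections. *)
Definition is_topology (O : {set {set T}}) : Prop :=
  [/\ set0 \in O, setT \in O,
      (forall U V, U \in O -> V \in O -> U :|: V \in O) &
      (forall U V, U \in O -> V \in O -> U :&: V \in O)].

Definition Umin (O : {set {set T}}) (x : T) : {set T} :=
  \bigcap_(U in O | x \in U) U.

Definition nested_seq (O : {set {set T}}) (x : T) (s : seq {set T}) : Prop :=
  [/\ 0 < size s,
      nth set0 s 0 = Umin O x,
      last set0 s = setT,
      (forall U, U \in s -> U \in O) &
      (forall i, i.+1 < size s ->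
         nth set0 s i \proper nth set0 s i.+1 /\
         (forall V, V \in O ->
            ~ (nth set0 s i \proper V /\ V \proper nth set0 s i.+1)))].

Definition furth_ok (O : {set {set T}}) (x y : T) (k : nat) : Prop :=
  exists s, nested_seq O x s /\ k < size s /\ y \in nth set0 s k.

(* The furtherness function Psi(x,y): least such k (0 by default if none
   exists, which never happens for a topology). *)
Definition Psi (O : {set {set T}}) (x y : T) : nat :=
  match pselect (exists k, furth_ok O x y k) with
  | left H => @ex_minn (fun k => `[< furth_ok O x y k >])
                (let: ex_intro k Hk := H in ex_intro _ k (asboolT Hk))
  | right _ => 0
  end.

Definition bball (O : {set {set T}}) (x : T) (n : nat) : {set T} :=
  [set y | Psi O y x < n].

Definition in_Bminus (O : {set {set T}}) (A : {set T}) : Prop :=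
  exists x n, 0 < n /\ A = bball O x n.

Definition is_basis (B : {set T} -> Prop) : Prop :=
  (forall z : T, exists A, B A /\ z \in A) /\
  (forall A1 A2 z, B A1 -> B A2 -> z \in A1 :&: A2 ->
     exists A3, [/\ B A3, z \in A3 & A3 \subset A1 :&: A2]).

Definition generated_open (B : {set T} -> Prop) (A : {set T}) : Prop :=
  forall z, z \in A -> exists A', [/\ B A', z \in A' & A' \subset A].

Definition op_open (O : {set {set T}}) (A : {set T}) : Prop :=
  ~: A \in O.

End FiniteTop.

From mathcomp Require Import all_boot.
From mathcomp Require Import boolp.
Set Implicit Arguments. Unset Strict Implicit. Unset Printing Implicit Defensive.

(* In a finite space, Psi(y,x) = 0 exactly when x lies in U_y, i.e. y is in
   the closure of x.  Moreover Psi(-,x) can only decrease when one passes from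
   y to a point z with y in U_z: joining U_z to a nested sequence around y
   yields, after discarding repetitions, a nested sequence around z in which x
   occurs no later.  Hence every backward ball B^-(x,n) is a union of point
   closures B^-(z,1) = cl{z}, so the backward balls form a basis whose open
   sets are the sets closed under taking closures of points, i.e. the closed
   sets of the original topology. *)

Section FiniteTopology.
Variables (T : finType) (O : {set {set T}}).
Hypothesis O_top : is_topology O.

Lemma open0 : set0 \in O. Proof. by case: O_top. Qed.
Lemma openT : setT \in O. Proof. by case: O_top. Qed.
Lemma openU U V : U \in O -> V \in O -> U :|: V \in O.
Proof. by case: O_top => _ _ + _; apply. Qed.
Lemma openI U V : U \in O -> V \in O -> U :&: V \in O.
Proof. by case: O_top => _ _ _; apply. Qed.

Lemma Umin_open x : Umin O x \in O.
Proof.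
by apply: (big_ind (fun U => U \in O)); [exact: openT | exact: openI |] => U /andP[].
Qed.

Lemma mem_Umin x : x \in Umin O x.
Proof. by apply/bigcapP => U /andP[]. Qed.

Lemma Umin_sub x U : U \in O -> x \in U -> Umin O x \subset U.
Proof. by move=> UO xU; apply: bigcap_inf; rewrite UO xU. Qed.

Lemma Umin_subset y z : y \in Umin O z -> Umin O y \subset Umin O z.
Proof. exact/Umin_sub/Umin_open. Qed.

Lemma open_Umin_subP (U : {set T}) :
  reflect (forall x, x \in U -> Umin O x \subset U) (U \in O).
Proof.
apply: (iffP idP) => [UO x|UminU]; first exact: Umin_sub.
have -> : U = \bigcup_(x in U) Umin O x.
  apply/eqP; rewrite eqEsubset; apply/andP; split.
    by apply/subsetP => x xU; apply/bigcupP; exists x => //; exact: mem_Umin.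
  by apply/bigcupsP.
apply: (big_ind (fun V => V \in O)); [exact: open0 | exact: openU |].
by move=> x _; exact: Umin_open.
Qed.

Definition covers (a b : {set T}) : bool :=
  (a \proper b) && [forall V in O, ~~ ((a \proper V) && (V \proper b))].

Lemma covers_setUl c a b : c \in O -> b \in O -> covers a b ->
  (c :|: a == c :|: b) || covers (c :|: a) (c :|: b).
Proof.
move=> cO bO /andP[ab /forall_inP ab_cover].
have [//|neq_cacb] /= := eqVneq (c :|: a) (c :|: b).
have sab := proper_sub ab.
rewrite /covers properEneq neq_cacb setUS //=.
apply/forall_inP => V VO; apply/negP => /andP[].
rewrite !properE => /andP[caV VNca] /andP[Vcb cbNV].
have /negP := ab_cover (V :&: b) (openI VO bO); apply.
rewrite !properE subsetIr subsetI sab andbT; apply/andP; split.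
- apply/andP; split; first exact: subset_trans (subsetUr c a) caV.
  apply: contra VNca => bVa; apply/subsetP => v vV.
  have := subsetP Vcb v vV; rewrite !inE => /orP[-> // | vb].
  by rewrite (subsetP bVa) ?orbT // inE vV vb.
- apply: contra cbNV => bVb; apply/subsetP => v.
  rewrite inE => /orP[vc | vb]; first by rewrite (subsetP caV) // inE vc.
  by have := subsetP bVb v vb; rewrite inE => /andP[].
Qed.

(* Joining c may merge consecutive sets of the chain, so an index k can only
   move down to some j <= k. *)
Lemma covers_path_setUl c a t : c \in O -> a \in O ->
  all (mem O) t -> path covers a t ->
  exists t', [/\ path covers (c :|: a) t', all (mem O) t',
    last (c :|: a) t' = c :|: last a t &
    forall k, k <= size t -> exists2 j, j <= k &
      nth set0 ((c :|: a) :: t') j = c :|: nth set0 (a :: t) k].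
Proof.
move=> cO; elim: t a => [|b t IH] a aO /=.
  by move=> _ _; exists [::]; split=> // k; rewrite leqn0 => /eqP->; exists 0.
case/andP=> bO tO /andP[ab abt].
have [t' [pt' t'O lt' nth_t']] := IH b bO tO abt.
have /orP[/eqP cab_eq | cab] := covers_setUl cO bO ab.
  exists t'; rewrite cab_eq; split=> //; case=> [|k] k_le; first by exists 0.
  by have [j jk nth_j] := nth_t' k k_le; exists j; first exact: leqW.
exists (c :|: b :: t'); split=> /=; rewrite ?cab ?pt' ?openU ?t'O //.
by case=> [|k] k_le; [exists 0 | have [j jk nth_j] := nth_t' k k_le; exists j.+1].
Qed.

Lemma nested_seq_head x s : nested_seq O x s -> exists t, s = Umin O x :: t.
Proof. by case: s => [[]//|a t] [_ /= <-]; exists t. Qed.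

Lemma nested_seqE x t : nested_seq O x (Umin O x :: t) <->
  [/\ all (mem O) t, path covers (Umin O x) t & last (Umin O x) t = setT].
Proof.
split=> [[_ _ lastT sO cov] | [tO pt lastT]].
  split=> //; first by apply/allP => U Ut; apply: sO; rewrite inE Ut orbT.
  apply/(pathP set0) => i /cov[prop no_mid]; rewrite /covers prop.
  by apply/forall_inP => V VO; apply/negP => /andP[h1 h2]; exact: (no_mid V VO).
split=> //.
- by move=> U; rewrite inE => /predU1P[->|]; [exact: Umin_open | move: U; apply/allP].
- move=> i /(pathP set0 pt i) /andP[prop /forall_inP no_mid]; split=> // V VO.
  by move=> [h1 h2]; move: (no_mid V VO); rewrite h1 h2.
Qed.

Lemma covers_path_to_setT U : U \in O ->
  exists t, [/\ all (mem O) t, path covers U t & last U t = setT].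
Proof.
move: {2}#|~: U| (leqnn #|~: U|) => n; elim: n U => [|n IH] U.
  rewrite leqn0 cards_eq0 => /eqP UC0 _; exists [::].
  by rewrite /= -(setCK U) UC0 setC0.
move=> cardU UO; have [-> | UNT] := eqVneq U setT; first by exists [::].
have UT : (setT \in O) && (U \proper setT) by rewrite openT properEneq UNT subsetT.
have [V /andP[VO UV] V_min] :=
  @arg_minnP _ setT (fun V : {set T} => (V \in O) && (U \proper V)) (fun V => #|V|) UT.
have ltV : #|~: V| < #|~: U| by rewrite proper_card // properC.
have [t [tO pt lastT]] := IH V (leq_trans ltV cardU) VO.
exists (V :: t); split; rewrite /= ?VO ?pt //= andbT /covers UV.
apply/forall_inP => W WO; apply/negP => /andP[UW WV].
by have := V_min W; rewrite WO UW leqNgt proper_card // => /(_ isT).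
Qed.

Lemma nested_seq_exists x : exists t, nested_seq O x (Umin O x :: t).
Proof.
have [t ?] := covers_path_to_setT (Umin_open x).
by exists t; apply/nested_seqE.
Qed.

Lemma furth_ok_exists x y : exists k, furth_ok O x y k.
Proof.
have [t nt] := nested_seq_exists x; have /nested_seqE[_ _ lastT] := nt.
exists (size t), (Umin O x :: t); split=> //; split=> //.
by rewrite -[size t]/((size (Umin O x :: t)).-1) nth_last /= lastT inE.
Qed.

Lemma furth_ok_Psi x y : furth_ok O x y (Psi O x y).
Proof.
rewrite /Psi; case: pselect => [ex|/(_ (furth_ok_exists x y))//].
by case: ex_minnP => k /asboolP.
Qed.

Lemma Psi_min x y k : furth_ok O x y k -> Psi O x y <= k.
Proof.
rewrite /Psi; case: pselect => [ex|/(_ (furth_ok_exists x y))//].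
by case: ex_minnP => m _ m_min /asboolP; exact: m_min.
Qed.

Lemma Psi_eq0 y x : (Psi O y x == 0) = (x \in Umin O y).
Proof.
apply/eqP/idP => [Psi0 | xy].
  have [s [ns [_ xs]]] := furth_ok_Psi y x; have [t Es] := nested_seq_head ns.
  by move: xs; rewrite Psi0 Es.
apply/eqP; rewrite -leqn0; apply: Psi_min.
by have [t nt] := nested_seq_exists y; exists (Umin O y :: t).
Qed.

Lemma Psi_Umin_le x y z : y \in Umin O z -> Psi O z x <= Psi O y x.
Proof.
move=> yz; have [s [ns [k_lt xk]]] := furth_ok_Psi y x.
have [t Es] := nested_seq_head ns; subst s; case/nested_seqE: ns => tO pt lastT.
have [t' [pt' t'O lastt' nth_t']] :=
  covers_path_setUl (Umin_open z) (Umin_open y) tO pt.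
rewrite (setUidPl (Umin_subset yz)) {}lastT setUT in pt' lastt' nth_t'.
have [j jk nth_j] := nth_t' _ k_lt.
have xj : x \in nth set0 (Umin O z :: t') j by rewrite nth_j inE xk orbT.
have j_lt : j < size (Umin O z :: t').
  by rewrite ltnNge; apply: contraTN xj => /(nth_default set0) ->; rewrite inE.
apply: leq_trans jk; apply: Psi_min; exists (Umin O z :: t').
by split; first exact/nested_seqE.
Qed.

Lemma bball1 z : bball O z 1 = [set y | z \in Umin O y].
Proof. by apply/setP => y; rewrite !inE ltnS leqn0 Psi_eq0. Qed.

Lemma bball1_sub z x n : z \in bball O x n -> bball O z 1 \subset bball O x n.
Proof.
rewrite bball1 inE => zx; apply/subsetP => y; rewrite !inE => zy.
exact: leq_ltn_trans (Psi_Umin_le x zy) zx.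
Qed.

Lemma mem_bball1 z : z \in bball O z 1.
Proof. by rewrite bball1 inE mem_Umin. Qed.

Lemma Bminus_basis : is_basis (in_Bminus O).
Proof.
split=> [z | _ _ z [x1 [n1 [_ ->]]] [x2 [n2 [_ ->]]]].
  by exists (bball O z 1); split; [exists z, 1 | exact: mem_bball1].
rewrite inE => /andP[z1 z2]; exists (bball O z 1).
by split; [exists z, 1 | exact: mem_bball1 | rewrite subsetI !bball1_sub].
Qed.

Lemma generated_open_bball1 A :
  generated_open (in_Bminus O) A <-> forall z, z \in A -> bball O z 1 \subset A.
Proof.
split=> [A_open z zA | A_ball z zA].
  have [B [[x [n [_ ->]]] zB BA]] := A_open z zA.
  exact: subset_trans (bball1_sub zB) BA.
by exists (bball O z 1); split; [exists z, 1 | exact: mem_bball1 | exact: A_ball].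
Qed.

Lemma generated_open_BminusE A : generated_open (in_Bminus O) A <-> ~: A \in O.
Proof.
rewrite generated_open_bball1; split=> [A_ball | /open_Umin_subP Ac_open z zA].
  apply/open_Umin_subP => y; rewrite inE => yNA; apply/subsetP => z zy.
  rewrite inE; apply: contra yNA => zA.
  by apply: (subsetP (A_ball z zA)); rewrite bball1 inE.
apply/subsetP => y; rewrite bball1 inE => zy; apply: contraT => yNA.
by have := subsetP (Ac_open y _) z zy; rewrite !inE zA => /(_ yNA).
Qed.

End FiniteTopology.

Theorem mainTheorem12 (T : finType) (O : {set {set T}}) :
  is_topology O ->
  is_basis (in_Bminus O) /\
  (forall A : {set T}, generated_open (in_Bminus O) A <-> op_open O A).
Proof.
move=> O_top; split; first exact: Bminus_basis.
by move=> A; exact: (generated_open_BminusE O_top A).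
Qed.
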